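(* Let $X$ be a random variable geometrically distributed with parameter $f \in (0,1]$, i.e. $\Pr[X = k] = (1-f)^{k-1} f$ for $k \in \{1,2,\dots\}$. Then with $d_2 = e^{\gamma}$, where $\gamma$ is the Euler–Mascheroni constant, $$\log(\mathbb{E}[X]) \le \mathbb{E}[\log(d_2 X)]$$ for all $f \in (0,1]$. *)

From Stdlib Require Import Reals.
From Coquelicot Require Import Coquelicot.
Open Scope R_scope.

Fixpoint harmonic (n : nat) : R :=
  match n with
  | O => 0
  | S m => harmonic m + / INR (S m)
  end.

Definition euler_gamma : R :=
  real (Lim_seq (fun n => harmonic n - ln (INR n))).

Definition geom_pmf (f : R) (k : nat) : R := (1 - f) ^ (k - 1) * f.

Definition geom_expect (f : R) (g : R -> R) : R :=
  Series (fun n => geom_pmf f (S n) * g (INR (S n))).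

Definition d2_const : R := exp euler_gamma.

From Stdlib Require Import Reals Lra Lia.
From Coquelicot Require Import Coquelicot.
Open Scope R_scope.

(* Write q = 1 - f.  Then E[X] = 1/f and E[ln (d2 X)] = gamma + E[ln X].  Summation
   by parts turns E[ln X] into sum_(j>=1) q^j (ln (j+1) - ln j), while
   -ln f = sum_(j>=1) q^j / j.  Hence -ln f - E[ln X] = sum_(j>=1) q^j g_j with
   g_j = 1/j - ln ((j+1)/j) >= 0, and this is at most sum_j g_j = gamma. *)

Lemma ln_le_sub_1 x : 0 < x -> ln x <= x - 1.
Proof.
  intros Hx. pose proof (exp_ineq1_le (ln x)) as H.
  rewrite exp_ln in H by exact Hx. lra.
Qed.

Lemma ln_sub_le_div a b : 0 < a -> 0 < b -> ln a - ln b <= (a - b) / b.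
Proof.
  intros Ha Hb. rewrite <- ln_div by assumption.
  replace ((a - b) / b) with (a / b - 1) by (field; lra).
  apply ln_le_sub_1, Rdiv_lt_0_compat; assumption.
Qed.

Lemma ln_sub_ge_div a b : 0 < a -> 0 < b -> (a - b) / a <= ln a - ln b.
Proof.
  intros Ha Hb. pose proof (ln_sub_le_div b a Hb Ha) as H.
  replace ((a - b) / a) with (- ((b - a) / a)) by (field; lra). lra.
Qed.

Lemma INR_succ_pos n : 0 < INR (S n).
Proof. apply lt_0_INR; lia. Qed.

Lemma INR_succ_sub n : INR (S n) - INR n = 1.
Proof. rewrite S_INR. ring. Qed.

Lemma ln_succ_sub_le n : ln (INR (S (S n))) - ln (INR (S n)) <= / INR (S n).
Proof.
  pose proof (ln_sub_le_div _ _ (INR_succ_pos (S n)) (INR_succ_pos n)) as H.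
  rewrite INR_succ_sub in H. unfold Rdiv in H. lra.
Qed.

Lemma ln_succ_sub_ge n : / INR (S (S n)) <= ln (INR (S (S n))) - ln (INR (S n)).
Proof.
  pose proof (ln_sub_ge_div _ _ (INR_succ_pos (S n)) (INR_succ_pos n)) as H.
  rewrite INR_succ_sub in H. unfold Rdiv in H. lra.
Qed.

Lemma ln_INR_succ_ge_0 n : 0 <= ln (INR (S n)).
Proof. rewrite <- ln_1. apply ln_le; [lra|]. apply (le_INR 1). lia. Qed.

Lemma ln_INR_succ_le n : ln (INR (S n)) <= INR (S n).
Proof. pose proof (ln_le_sub_1 _ (INR_succ_pos n)). lra. Qed.

(* g_(n+1) in the notation of the header. *)
Definition euler_gap (n : nat) : R :=
  / INR (S n) - (ln (INR (S (S n))) - ln (INR (S n))).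

Lemma euler_gap_ge_0 n : 0 <= euler_gap n.
Proof. unfold euler_gap. pose proof (ln_succ_sub_le n). lra. Qed.

Lemma sum_euler_gap N :
  sum_f_R0 euler_gap N = harmonic (S N) - ln (INR (S (S N))).
Proof.
  induction N as [|N IH]; cbn [sum_f_R0 harmonic].
  - unfold euler_gap. replace (INR 1) with 1 by reflexivity. rewrite ln_1. ring.
  - rewrite IH. unfold euler_gap. cbn [harmonic]. ring.
Qed.

Lemma harmonic_sub_ln_le_1 n : harmonic (S n) - ln (INR (S n)) <= 1.
Proof.
  induction n as [|n IH].
  - cbn [harmonic]. replace (INR 1) with 1 by reflexivity. rewrite ln_1. lra.
  - cbn [harmonic] in *. pose proof (ln_succ_sub_ge n). lra.
Qed.

(* [Lim_seq] is monotone without any convergence hypothesis, so it suffices to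
   bound the sequence defining [euler_gamma] below by a partial sum of the gaps;
   the upper bound 1 only rules out an infinite limit, where [real] gives 0. *)
Lemma sum_euler_gap_le_gamma N : sum_f_R0 euler_gap N <= euler_gamma.
Proof.
  set (u := fun n => harmonic n - ln (INR n)).
  assert (Hlo : Rbar_le (sum_f_R0 euler_gap N) (Lim_seq u)).
  { rewrite <- (Lim_seq_const (sum_f_R0 euler_gap N)). apply Lim_seq_le_loc.
    exists (S N). intros [|m] Hm; [lia|].
    assert (Hmono : sum_f_R0 euler_gap N <= sum_f_R0 euler_gap m).
    { apply Rge_le, growing_prop; [|lia].
      intros k. cbn [sum_f_R0]. pose proof (euler_gap_ge_0 (S k)). lra. }
    rewrite (sum_euler_gap m) in Hmono. unfold u.
    pose proof (ln_le _ _ (INR_succ_pos m) (Rlt_le _ _ (lt_INR _ _ (Nat.lt_succ_diag_r (S m))))).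
    lra. }
  assert (Hhi : Rbar_le (Lim_seq u) 1).
  { rewrite <- (Lim_seq_const 1). apply Lim_seq_le_loc.
    exists 1%nat. intros [|m] Hm; [lia|]. apply harmonic_sub_ln_le_1. }
  unfold euler_gamma. fold u.
  destruct (Lim_seq u); simpl in *; try contradiction; lra.
Qed.

Lemma sum_pow_mul_euler_gap_le_gamma q N :
  0 <= q <= 1 -> sum_f_R0 (fun j => q ^ S j * euler_gap j) N <= euler_gamma.
Proof.
  intros Hq. eapply Rle_trans; [|apply (sum_euler_gap_le_gamma N)].
  apply sum_Rle. intros j _.
  pose proof (euler_gap_ge_0 j).
  assert (0 <= q ^ S j <= 1).
  { split; [apply pow_le; lra|]. rewrite <- (pow1 (S j)). apply pow_incr. lra. }
  nra.
Qed.

Definition log_partial_sum (N : nat) (t : R) : R :=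
  sum_f_R0 (fun j => t ^ S j / INR (S j)) N.

Lemma log_partial_sum_0 N : log_partial_sum N 0 = 0.
Proof.
  unfold log_partial_sum. rewrite (sum_eq _ (fun _ => 0)).
  - rewrite sum_cte. ring.
  - intros i _. simpl. unfold Rdiv. ring.
Qed.

Lemma is_derive_log_partial_sum N t :
  is_derive (log_partial_sum N) t (sum_f_R0 (fun j => t ^ j) N).
Proof.
  induction N as [|N IH].
  - unfold log_partial_sum; simpl. auto_derive; auto. simpl. field.
  - change (is_derive (fun t => log_partial_sum N t + t ^ S (S N) / INR (S (S N))) t
      (sum_f_R0 (fun j => t ^ j) N + t ^ S N)).
    apply (is_derive_plus _ _ _ _ _ IH).
    pose proof (INR_succ_pos (S N)).
    auto_derive; auto.
    change (match N with 0%nat => 1 | S _ => INR N + 1 end) with (INR (S N)).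
    rewrite <- S_INR. simpl pow. field. lra.
Qed.

(* Mean value theorem for t |-> -ln (1 - t) - log_partial_sum N t, whose
   derivative t^(N+1) / (1 - t) is increasing on [0, q]. *)
Lemma neg_ln_one_sub_le N q :
  0 <= q < 1 -> - ln (1 - q) <= log_partial_sum N q + q ^ S (S N) / (1 - q).
Proof.
  intros Hq.
  set (h := fun t => - ln (1 - t) - log_partial_sum N t).
  assert (dh : forall t, t < 1 -> is_derive h t (t ^ S N / (1 - t))).
  { intros t Ht.
    replace (t ^ S N / (1 - t)) with (- (-1 / (1 - t)) - sum_f_R0 (fun j => t ^ j) N)
      by (rewrite tech3 by lra; field; lra).
    assert (Hln : is_derive (fun t => - ln (1 - t)) t (- (-1 / (1 - t))))
      by (auto_derive; [lra | field; lra]).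
    exact (is_derive_minus _ _ _ _ _ Hln (is_derive_log_partial_sum N t)). }
  destruct (MVT_gen h 0 q (fun t => t ^ S N / (1 - t))) as [c [Hc E]].
  - intros x Hx. apply dh. rewrite Rmax_right in Hx; lra.
  - intros x Hx. rewrite Rmin_left, Rmax_right in Hx by lra.
    apply continuity_pt_filterlim, (ex_derive_continuous (K := R_AbsRing) (V := R_NormedModule)).
    eexists. apply dh. lra.
  - rewrite Rmin_left, Rmax_right in Hc by lra.
    unfold h in E. rewrite log_partial_sum_0, Rminus_0_r, Rminus_0_r, ln_1 in E.
    assert (c ^ S N / (1 - c) <= q ^ S N / (1 - q)).
    { unfold Rdiv. apply Rmult_le_compat.
      - apply pow_le; lra.
      - left; apply Rinv_0_lt_compat; lra.
      - apply pow_incr; lra.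
      - apply Rinv_le_contravar; lra. }
    replace (q ^ S (S N) / (1 - q)) with (q ^ S N / (1 - q) * q) by (simpl; field; lra).
    nra.
Qed.

Lemma sum_f_R0_by_parts (w a : nat -> R) N :
  sum_f_R0 (fun n => (w n - w (S n)) * a n) N =
  w O * a O + sum_f_R0 (fun n => w (S n) * (a (S n) - a n)) N - w (S N) * a (S N).
Proof. induction N as [|N IH]; cbn [sum_f_R0]; [|rewrite IH]; ring. Qed.

Lemma neg_ln_one_sub_le_gamma_add_partial q N :
  0 <= q < 1 ->
  - ln (1 - q) <=
  euler_gamma + sum_f_R0 (fun n => q ^ n * (1 - q) * ln (INR (S n))) N
  + (INR (S (S N)) * q ^ S N + q ^ S (S N) / (1 - q)).
Proof.
  intros Hq.
  pose proof (neg_ln_one_sub_le N q Hq) as Hlog.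
  assert (Hsplit : log_partial_sum N q =
    sum_f_R0 (fun j => q ^ S j * (ln (INR (S (S j))) - ln (INR (S j)))) N
    + sum_f_R0 (fun j => q ^ S j * euler_gap j) N).
  { rewrite <- plus_sum. apply sum_eq. intros j _. unfold euler_gap, Rdiv. ring. }
  pose proof (sum_f_R0_by_parts (pow q) (fun n => ln (INR (S n))) N) as Hparts.
  cbv beta in Hparts. replace (INR 1) with 1 in Hparts by reflexivity. rewrite ln_1 in Hparts.
  rewrite (sum_eq _ (fun n => q ^ n * (1 - q) * ln (INR (S n)))) in Hparts
    by (intros n _; simpl; ring).
  pose proof (sum_pow_mul_euler_gap_le_gamma q N ltac:(lra)).
  assert (q ^ S N * ln (INR (S (S N))) <= INR (S (S N)) * q ^ S N).
  { rewrite Rmult_comm. apply Rmult_le_compat_r; [apply pow_le; lra|].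
    apply ln_INR_succ_le. }
  lra.
Qed.

Lemma geom_pmf_S f n : geom_pmf f (S n) = (1 - f) ^ n * f.
Proof. unfold geom_pmf. rewrite Nat.sub_succ, Nat.sub_0_r. reflexivity. Qed.

Lemma is_series_succ_mul_pow q :
  0 <= q < 1 -> is_series (fun n => INR (S n) * q ^ n) (/ (1 - q) ^ 2).
Proof.
  intros Hq.
  assert (Hgeom : is_series (fun n => q ^ n) (/ (1 - q)))
    by (apply is_series_geom; rewrite Rabs_pos_eq; lra).
  pose proof (is_series_mult_pos _ _ _ _ Hgeom Hgeom
    (fun n => pow_le q n (proj1 Hq)) (fun n => pow_le q n (proj1 Hq))) as H.
  replace (/ (1 - q) ^ 2) with (/ (1 - q) * / (1 - q)) by (field; lra).
  eapply is_series_ext; [|exact H]. intros n. cbv beta.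
  rewrite (sum_eq _ (fun _ => q ^ n)).
  - rewrite sum_cte. apply Rmult_comm.
  - intros i Hi. rewrite <- pow_add. f_equal. lia.
Qed.

Lemma is_series_geom_pmf f :
  0 < f <= 1 -> is_series (fun n => geom_pmf f (S n)) 1.
Proof.
  intros Hf.
  assert (H : is_series (fun n => (1 - f) ^ n) (/ (1 - (1 - f))))
    by (apply is_series_geom; rewrite Rabs_pos_eq; lra).
  apply (is_series_scal_r f) in H.
  replace 1 with (/ (1 - (1 - f)) * f) by (field; lra).
  eapply is_series_ext; [|exact H]. intros n. symmetry. apply geom_pmf_S.
Qed.

Lemma geom_expect_id f : 0 < f <= 1 -> geom_expect f (fun x => x) = / f.
Proof.
  intros Hf. unfold geom_expect.
  rewrite (Series_ext _ (fun n => INR (S n) * (1 - f) ^ n * f))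
    by (intros n; rewrite geom_pmf_S; ring).
  rewrite Series_scal_r, (is_series_unique _ _ (is_series_succ_mul_pow (1 - f) ltac:(lra))).
  field. lra.
Qed.

Lemma ex_series_geom_pmf_ln f :
  0 < f <= 1 -> ex_series (fun n => geom_pmf f (S n) * ln (INR (S n))).
Proof.
  intros Hf.
  apply (ex_series_le (K := R_AbsRing) (V := R_CompleteNormedModule))
    with (b := fun n => INR (S n) * (1 - f) ^ n * f).
  - intros n. change (Rabs (geom_pmf f (S n) * ln (INR (S n))) <= INR (S n) * (1 - f) ^ n * f).
    rewrite geom_pmf_S.
    assert (0 <= (1 - f) ^ n * f) by (apply Rmult_le_pos; [apply pow_le|]; lra).
    pose proof (ln_INR_succ_ge_0 n). pose proof (ln_INR_succ_le n).
    rewrite Rabs_pos_eq by nra. nra.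
  - eexists. exact (is_series_scal_r f _ _ (is_series_succ_mul_pow (1 - f) ltac:(lra))).
Qed.

Lemma geom_expect_ln_mul f c :
  0 < f <= 1 -> 0 < c ->
  geom_expect f (fun x => ln (c * x)) = ln c + geom_expect f ln.
Proof.
  intros Hf Hc. unfold geom_expect.
  rewrite (Series_ext _ (fun n => geom_pmf f (S n) * ln c + geom_pmf f (S n) * ln (INR (S n))))
    by (intros n; rewrite ln_mult by (apply Hc || apply INR_succ_pos); ring).
  rewrite Series_plus, Series_scal_r, (is_series_unique _ _ (is_series_geom_pmf f Hf)).
  - ring.
  - apply ex_series_scal_r. eexists. apply is_series_geom_pmf, Hf.
  - apply ex_series_geom_pmf_ln, Hf.
Qed.

Lemma is_lim_seq_partial_error q :
  0 <= q < 1 ->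
  is_lim_seq (fun N => INR (S (S N)) * q ^ S N + q ^ S (S N) / (1 - q)) 0.
Proof.
  intros Hq.
  assert (T1 : is_lim_seq (fun n => INR (S n) * q ^ n) 0)
    by (apply ex_series_lim_0; eexists; exact (is_series_succ_mul_pow q Hq)).
  apply is_lim_seq_incr_1 in T1.
  assert (T2 : is_lim_seq (fun n => q ^ S (S n)) 0).
  { apply (is_lim_seq_incr_1 (fun n => q ^ S n)), (is_lim_seq_incr_1 (pow q)).
    apply is_lim_seq_geom. rewrite Rabs_pos_eq; lra. }
  apply (is_lim_seq_scal_r _ (/ (1 - q))) in T2. simpl in T2. rewrite Rmult_0_l in T2.
  replace (Finite 0) with (Finite (0 + 0)) by (f_equal; ring).
  exact (is_lim_seq_plus' _ _ _ _ T1 T2).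
Qed.

Lemma neg_ln_le_gamma_add_geom_expect_ln f :
  0 < f <= 1 -> - ln f <= euler_gamma + geom_expect f ln.
Proof.
  intros Hf. set (q := 1 - f).
  assert (Hq : 0 <= q < 1) by (unfold q; lra).
  replace f with (1 - q) by (unfold q; ring).
  pose proof (is_lim_seq_partial_error q Hq) as Htail.
  assert (Hsum : is_lim_seq (sum_f_R0 (fun n => q ^ n * (1 - q) * ln (INR (S n))))
                            (geom_expect (1 - q) ln)).
  { pose proof (Series_correct _ (ex_series_geom_pmf_ln (1 - q) ltac:(lra))) as H.
    eapply is_lim_seq_ext; [|exact H]. intros N. rewrite sum_n_Reals.
    apply sum_eq. intros n _. rewrite geom_pmf_S. replace (1 - (1 - q)) with q by ring.
    reflexivity. }
  pose proof (is_lim_seq_plus' _ _ _ _ (is_lim_seq_plus' _ _ _ _ (is_lim_seq_const euler_gamma) Hsum)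
                Htail) as Hupper.
  rewrite Rplus_0_r in Hupper.
  exact (is_lim_seq_le _ _ _ _ (fun N => neg_ln_one_sub_le_gamma_add_partial q N Hq)
           (is_lim_seq_const _) Hupper).
Qed.

Theorem lemma8 (f : R) (hf : 0 < f <= 1) :
  ln (geom_expect f (fun x => x)) <= geom_expect f (fun x => ln (d2_const * x)).
Proof.
  rewrite geom_expect_id, geom_expect_ln_mul, ln_Rinv by (apply exp_pos || lra).
  unfold d2_const. rewrite ln_exp.
  apply neg_ln_le_gamma_add_geom_expect_ln, hf.
Qed.
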